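(* Let $F$ be a bipartite graph or an odd cycle. For every $\delta>0$ there exists $\varepsilon>0$ such that for all sufficiently large $n$, every $n$-vertex graph $G$ containing no copy of $F^{\triangle}$ and having at least $n^2/4-\varepsilon n^2$ edges can be made bipartite by removing at most $\delta n^2$ edges. In particular, every $n$-vertex graph $G$ containing no copy of $F^{\triangle}$ satisfies $|G|\le n^2/4+o(n^2)$.
   Context: $|G|$ is the number of edges of $G$. The $\triangle$-blowup $F^{\triangle}$ of a graph $F$ is obtained by replacing each edge $uv$ by a triangle $uvw_{uv}$ with a new vertex $w_{uv}$, distinct edges receiving distinct new vertices. *)

From HB Require Import structures.
From mathcomp Require Import all_boot all_order all_algebra.
From mathcomp Require Import reals.
Set Implicit Arguments. Unset Strict Implicit. Unset Printing Implicit Defensive.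
Import Order.TTheory GRing.Theory Num.Theory.

Definition simple_graph (V : finType) (e : rel V) : Prop :=
  (forall x y, e x y = e y x) /\ (forall x, ~~ e x x).

Definition num_edges (n : nat) (e : rel 'I_n) : nat :=
  #|[set p : 'I_n * 'I_n | e p.1 p.2 && (p.1 < p.2)%N]|.

Definition bipartite (V : finType) (e : rel V) : Prop :=
  exists c : V -> bool, forall x y, e x y -> c x != c y.

Definition cycle_rel (k : nat) : rel 'I_k :=
  fun i j => (j == (i.+1 %% k)%N :> nat) || (i == (j.+1 %% k)%N :> nat).

Definition odd_cycle (V : finType) (e : rel V) : Prop :=
  exists k : nat, [/\ odd k, (3 <= k)%N &
    exists f : 'I_k -> V, bijective f /\ forall i j, e (f i) (f j) = cycle_rel i j].

Definition edge_sets (V : finType) (e : rel V) : {set {set V}} :=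
  [set E : {set V} | [exists u, exists v, e u v && (E == [set u; v])]].

Definition blowup_vertex (V : finType) (e : rel V) : finType :=
  (V + {E : {set V} | E \in edge_sets e})%type.

(* The triangle blowup F^triangle: each edge uv of F becomes a triangle
   u v w_uv with a new vertex w_uv. *)
Definition blowup_rel (V : finType) (e : rel V) : rel (blowup_vertex e) :=
  fun a b =>
    match a, b with
    | inl u, inl v => e u v
    | inl u, inr E => u \in val E
    | inr E, inl u => u \in val E
    | inr _, inr _ => false
    end.

Definition contains_copy (U W : finType) (eH : rel U) (eG : rel W) : Prop :=
  exists f : U -> W, injective f /\ forall x y, eH x y -> eG (f x) (f y).
Arguments blowup_rel {V} e.
Arguments edge_sets {V} e.

From HB Require Import structures.
From mathcomp Require Import all_boot all_order all_algebra.
From mathcomp Require Import reals.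
From mathcomp Require Import zify ring lra.
Import Order.TTheory GRing.Theory Num.Theory.
Set Implicit Arguments. Unset Strict Implicit. Unset Printing Implicit Defensive.

(* F is properly 3-colourable with one colour class of size at most one, so F embeds in the
   cone over K_{|F|,|F|}.  Call an edge of G robust if it lies in at least |F^triangle|
   triangles; a copy of F made of robust edges extends greedily to a copy of F^triangle.  In an
   F^triangle-free G only O(n^2) triangles contain a non-robust edge, and no link of the robust
   subgraph contains K_{|F|+1,|F|+1}, so by Kovari-Sos-Turan counting every vertex lies in
   O(n^(2 - 1/(|F|+1))) robust triangles: G has o(n^3) triangles.  On the other hand, in any
   graph, averaging over x the cost of cutting G between N(x) and its complement, and applying
   Cauchy-Schwarz to the degrees, gives a vertex x with
   4n^2 (|G| - |G_x|) + 4n^2 |G| <= 4n T(G) + n^4, where G_x is the cut and T(G) counts ordered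
   triangles.  With T(G) = o(n^3) both statements follow. *)

Lemma leq_expn2r k m n : m <= n -> m ^ k <= n ^ k.
Proof. by case: k => [//|k] le_mn; rewrite leq_exp2r. Qed.

Lemma sum_bool_card (I : finType) (P : pred I) :
  \sum_i (P i : nat) = #|[set i | P i]|.
Proof.
by rewrite -sum1_card [in RHS]big_mkcond; apply: eq_bigr => i _; rewrite inE; case: (P i).
Qed.

Lemma exists_ge_average (I : finType) (i0 : I) (f : I -> nat) :
  exists x, \sum_i f i <= #|I| * f x.
Proof.
have [x _ max_x] := @arg_maxnP I i0 xpredT f isT.
by exists x; rewrite -sum_nat_const; apply: leq_sum => i _; apply: max_x.
Qed.

Lemma exists_le_average (I : finType) (i0 : I) (f : I -> nat) :
  exists x, #|I| * f x <= \sum_i f i.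
Proof.
have [x _ min_x] := @arg_minnP I i0 xpredT f isT.
by exists x; rewrite -sum_nat_const; apply: leq_sum => i _; apply: min_x.
Qed.

Lemma sum_pair_add (I : finType) (X : I -> nat) :
  \sum_u \sum_v (X u + X v) = 2 * (#|I| * \sum_i X i).
Proof.
under eq_bigr do rewrite big_split /= sum_nat_const.
by rewrite big_split /= sum_nat_const -big_distrr mul2n addnn.
Qed.

Lemma sum_expn_mul_sum_le (I : finType) (D : I -> nat) k :
  (\sum_i D i ^ k) * (\sum_i D i) <= #|I| * \sum_i D i ^ k.+1.
Proof.
have rearrangement a b : a ^ k * b + b ^ k * a <= a ^ k * a + b ^ k * b.
  wlog le_ba : a b / b <= a => [hwlog|].
    by case: (leqP b a) => [/hwlog//|/ltnW/hwlog]; rewrite addnC [X in _ <= X]addnC.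
  by have := leq_expn2r k le_ba; move: (a ^ k) (b ^ k) => A B; nia.
rewrite -leq_double -!mul2n -sum_pair_add.
have -> : 2 * ((\sum_i D i ^ k) * (\sum_i D i)) =
          \sum_u \sum_v (D u ^ k * D v + D v ^ k * D u).
  symmetry; under eq_bigr do rewrite big_split /= -big_distrr -big_distrl /=.
  by rewrite big_split /= -big_distrl -big_distrr /= addnn mul2n.
by apply: leq_sum => u _; apply: leq_sum => v _; rewrite !expnSr; apply: rearrangement.
Qed.

Lemma expn_sum_le (I : finType) (D : I -> nat) k :
  (\sum_i D i) ^ k.+1 <= #|I| ^ k * \sum_i D i ^ k.+1.
Proof.
elim: k => [|k IHk]; first by rewrite mul1n expn1; apply: leq_sum => i _; rewrite expn1.
rewrite expnS (leq_trans (leq_mul (leqnn _) IHk)) // expnSr -mulnA mulnCA.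
by rewrite leq_mul2l mulnC sum_expn_mul_sum_le orbT.
Qed.

Lemma expn_le_ffact n k : n ^ k.+1 <= n ^_ k.+1 + k.+1 ^ 2 * n ^ k.
Proof.
have succ_expn a j : a.+1 ^ j.+1 <= a ^ j.+1 + j.+1 * a.+1 ^ j.
  elim: j => [|j IHj]; first by rewrite !expn1 expn0; lia.
  have le_pow : a ^ j.+1 <= a.+1 ^ j.+1 by apply: leq_expn2r.
  move: IHj le_pow; rewrite !(expnS _ j.+1) !(expnS a.+1 j).
  by move: (a ^ j.+1) (a.+1 ^ j) => X Y; nia.
elim: k n => [n|k IHk [|n]]; first by rewrite ffactn1 expn1; lia.
  by rewrite exp0n.
have le_pow : n ^ k <= n.+1 ^ k by apply: leq_expn2r.
have := succ_expn n k; have := IHk n.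
rewrite ffactSS (expnS n.+1 k.+1) !(expnS n.+1 k) !(expnS n k).
move: (n ^ k) (n.+1 ^ k) (n ^_ k.+1) le_pow => X Y Z le_XY le_nX le_Y.
have := leq_mul (leqnn n.+1) le_XY; have := leq_mul (leqnn n.+1) le_nX.
have := leq_mul (leqnn n.+1) le_Y; rewrite -!mulnn; nia.
Qed.

Section InjectiveChoice.
Variables (I W : finType) (S : I -> {set W}) (B : {set W}).

Lemma injective_choice_seq (w0 : W) (l : seq I) :
  uniq l -> {in l, forall i, #|B| + size l <= #|S i|} ->
  exists g : I -> W, {in l &, injective g} /\ {in l, forall i, g i \in S i :\: B}.
Proof.
elim: l => [|i l IHl] /=; first by exists (fun=> w0).
case/andP=> il uniq_l big_S.
have [j lj|g [inj_g gS]] := IHl uniq_l.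
  by apply: leq_trans (big_S j _); rewrite ?addnS ?inE ?lj ?orbT.
have [w]: exists w, w \in S i :\: (B :|: g @: [set j in l]).
  apply/set0Pn; rewrite -card_gt0 cardsD subn_gt0.
  rewrite (leq_ltn_trans (subset_leq_card (subsetIr (S i) _))) //.
  rewrite (leq_ltn_trans (leq_card_setU _ _)) //.
  rewrite (leq_trans _ (big_S i (mem_head _ _))) // addnS ltnS leq_add2l.
  by apply: leq_trans (leq_imset_card _ _) _; rewrite cardsE card_size.
rewrite in_setD in_setU negb_or => /andP [/andP [w_notB w_new] wS].
exists (fun j => if j == i then w else g j); split.
  move=> j k; rewrite !inE.
  case: eqP => [-> _|_ /= lj]; case: eqP => [-> _|_ /= lk] //.
  - by move=> wg; move: w_new; rewrite wg imset_f ?inE.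
  - by move=> gw; move: w_new; rewrite -gw imset_f ?inE.
  - exact: inj_g.
move=> j; rewrite inE; case: eqP => [-> _|_ /= lj]; first by rewrite !inE w_notB.
exact: gS.
Qed.

Lemma injective_choice : (forall i, #|B| + #|I| <= #|S i|) ->
  exists g : I -> W, injective g /\ forall i, g i \in S i :\: B.
Proof.
move=> big_S; have [I0|I_gt0] := posnP #|I|.
  by exists (ffun0 I0); split=> [i|i]; have := card0_eq I0 i; rewrite !inE.
have [i0 _] := card_gt0P I_gt0.
have [w0 _] : exists w0, w0 \in S i0.
  by apply/set0Pn; rewrite -card_gt0 (leq_trans _ (big_S i0)) // addn_gt0 I_gt0 orbT.
have [|g [inj_g gS]] := injective_choice_seq w0 (enum_uniq I).
  by move=> i _; rewrite -cardE.
by exists g; split=> [j k|i]; [apply: inj_g | apply: gS]; rewrite mem_enum.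
Qed.

End InjectiveChoice.

Definition codeg (T : finType) (G : rel T) u v := #|[set w | G u w && G v w]|.

Definition robust_subgraph (T : finType) (G : rel T) K : rel T :=
  fun u v => G u v && (K <= codeg G u v).

(* Triangles are counted as ordered triples: [triangles G] is six times their number. *)
Definition triangles_at (T : finType) (G : rel T) x :=
  \sum_y \sum_z (G x y && G x z && G y z : nat).

Definition triangles (T : finType) (G : rel T) := \sum_x triangles_at G x.

Definition link_nbrs (T : finType) (G : rel T) x u := [set w | G x u && G x w && G u w].

Section Triangles.
Variables (T : finType) (G : rel T).
Hypothesis G_sym : symmetric G.

Lemma codegC u v : codeg G u v = codeg G v u.
Proof. by apply: eq_card => w; rewrite !inE andbC. Qed.

Lemma robust_subgraph_sym K : symmetric (robust_subgraph G K).
Proof. by move=> u v; rewrite /robust_subgraph G_sym codegC. Qed.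

Lemma triangles_robust_subgraph K :
  triangles G <= triangles (robust_subgraph G K) + 3 * (K * #|T| ^ 2).
Proof.
pose H := robust_subgraph G K.
pose light u v w := (G u w && G v w && (codeg G u v < K) : nat).
have sum_light : \sum_u \sum_v \sum_w light u v w <= K * #|T| ^ 2.
  have -> : K * #|T| ^ 2 = \sum_(u : T) \sum_(v : T) K.
    by rewrite !sum_nat_const -mulnn mulnC mulnA.
  apply: leq_sum => u _; apply: leq_sum => v _; rewrite /light.
  case: ltnP => [small|_]; last by rewrite big1 // => w _; rewrite andbF.
  by under eq_bigr do rewrite andbT; rewrite sum_bool_card ltnW.
have triangle_split x y z : (G x y && G x z && G y z : nat) <=
    (H x y && H x z && H y z : nat) + light x y z + light x z y + light y z x.
  rewrite /H /robust_subgraph /light (G_sym z y) (G_sym z x) (G_sym y x).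
  case: (G x y) (G x z) (G y z) => [] [] [] //=.
  by case: (ltnP (codeg G x y) K); case: (ltnP (codeg G x z) K); case: (ltnP (codeg G y z) K).
rewrite /triangles /triangles_at.
apply: leq_trans (_ : _ <= \sum_x \sum_y \sum_z ((H x y && H x z && H y z : nat)
    + light x y z + light x z y + light y z x)) _.
  by do 3!(apply: leq_sum => ? _); apply: triangle_split.
under eq_bigr => x _ do under eq_bigr => y _ do rewrite !big_split /=.
under eq_bigr => x _ do rewrite !big_split /=.
rewrite !big_split /= -!addnA leq_add2l mulSn mul2n -addnn !leq_add //.
  by under eq_bigr do rewrite exchange_big.
by rewrite exchange_big; under eq_bigr do rewrite exchange_big.
Qed.

End Triangles.

Lemma sum_link_nbrs (T : finType) (G : rel T) x :
  \sum_u #|link_nbrs G x u| = triangles_at G x.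
Proof. by apply: eq_bigr => u _; rewrite -sum_bool_card. Qed.

Section CommonMembers.
Variables (T : finType) (N : T -> {set T}).

Lemma sum_card_common_members s :
  \sum_(f : {ffun 'I_s -> T}) #|[set u | [forall i, f i \in N u]]| = \sum_u #|N u| ^ s.
Proof.
rewrite (eq_bigr (fun f : {ffun 'I_s -> T} => \sum_u ([forall i, f i \in N u] : nat))); last first.
  by move=> f _; rewrite sum_bool_card.
rewrite exchange_big /=; apply: eq_bigr => u _.
rewrite sum_bool_card -[in RHS](card_ord s) -card_ffun_on.
by apply: eq_card => f; rewrite inE; apply/forallP/ffun_onP.
Qed.

(* Kővári–Sós–Turán double counting: an injective tuple has few common members,
   and there are only O(n^s) non-injective tuples. *)
Lemma sum_card_expn_le s m :
  (forall f : 'I_s.+1 -> T, injective f -> #|[set u | [forall i, f i \in N u]]| <= m) ->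
  \sum_u #|N u| ^ s.+1 <= (m + s.+1 ^ 2) * #|T| ^ s.+1.
Proof.
move=> few_common; rewrite -sum_card_common_members.
set n := #|T|.
pose noninj := [set f : {ffun 'I_s.+1 -> T} | ~~ injectiveb f].
have card_noninj : #|noninj| + n ^_ s.+1 = n ^ s.+1.
  have := cardsC [set f : {ffun 'I_s.+1 -> T} | injectiveb f].
  rewrite card_inj_ffuns card_ffun card_ord addnC => <-; congr (_ + _).
  by apply: eq_card => f; rewrite !inE.
apply: leq_trans (_ : _ <= \sum_(f : {ffun 'I_s.+1 -> T}) (m + n * (~~ injectiveb f))) _.
  apply: leq_sum => f _; case: (injectiveP f) => [/few_common le_m|_].
    by rewrite muln0 addn0.
  by rewrite muln1 (leq_trans (max_card _)) ?leq_addl.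
rewrite big_split /= sum_nat_const card_ffun card_ord -big_distrr /= sum_bool_card.
have := expn_le_ffact n s; rewrite [n ^ s.+1]expnS in card_noninj *.
move: (n ^ s) (n ^_ s.+1) #|noninj| card_noninj => X Y Z card_noninj le_Y.
have : n * Z <= n * (s.+1 ^ 2 * X) by rewrite leq_mul2l; apply/orP; right; lia.
by move=> le_nZ; rewrite mulnDl mulnC leq_add // mulnCA.
Qed.

End CommonMembers.

Definition apex_colouring (V : finType) (F : rel V) (tau : V -> option bool) :=
  (forall u v, F u v -> tau u != tau v) /\
  (forall u v, tau u = None -> tau v = None -> u = v).

Lemma bipartite_apex_colouring (V : finType) (F : rel V) :
  bipartite F -> exists tau, apex_colouring F tau.
Proof. by case=> c proper_c; exists (fun v => Some (c v)); split=> // u v /proper_c. Qed.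

Definition cycle_colour (i : nat) := if i == 0 then None else Some (odd i).

Lemma cycle_apex_colouring k : 1 < k -> apex_colouring (@cycle_rel k) cycle_colour.
Proof.
move=> k_gt1; have step (i : 'I_k) : cycle_colour i != cycle_colour (i.+1 %% k).
  rewrite /cycle_colour; have [lt_ik|] := ltnP i.+1 k.
    by rewrite modn_small //=; case: (_ == 0); case: (odd i).
  move=> le_ki; have lt_ik := ltn_ord i.
  have -> : i.+1 %% k = 0 by rewrite (_ : i.+1 = k) ?modnn //; lia.
  by have -> : (i == 0 :> nat) = false by lia.
split=> [i j /orP [] /eqP ->|i j]; [exact: step | rewrite eq_sym; exact: step |].
rewrite /cycle_colour; case: eqP => // i0 _; case: eqP => // j0 _.
by apply: val_inj; rewrite /= i0 j0.
Qed.

Lemma odd_cycle_apex_colouring (V : finType) (F : rel V) :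
  odd_cycle F -> exists tau, apex_colouring F tau.
Proof.
case=> k [_ k_ge3 [f [[g fK gK] F_f]]].
have [proper_c unique_c] := cycle_apex_colouring (ltnW k_ge3).
exists (fun v => cycle_colour (g v)); split=> [u v|u v /unique_c c_u /c_u /(congr1 f)].
  by rewrite -{1}(gK u) -{1}(gK v) F_f => /proper_c.
by rewrite !gK.
Qed.

Section Copies.
Variables (V T : finType) (F : rel V).

Lemma cone_biclique_contains_copy (H : rel T) tau x (a b : V -> T) :
  symmetric H -> irreflexive H -> apex_colouring F tau ->
  injective a -> injective b ->
  (forall v, H x (a v)) -> (forall v, H x (b v)) -> (forall u v, H (a u) (b v)) ->
  contains_copy F H.
Proof.
move=> H_sym H_irr [proper_tau apex_tau] inj_a inj_b Hxa Hxb Hab.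
pose phi v := match tau v with None => x | Some true => a v | Some false => b v end.
have H_phi u v : tau u != tau v -> H (phi u) (phi v).
  rewrite /phi; case: (tau u) => [[]|]; case: (tau v) => [[]|] //= _;
  by rewrite ?Hxa ?Hxb ?Hab // H_sym ?Hxa ?Hxb ?Hab.
exists phi; split=> [u v eq_phi|u v /proper_tau /H_phi //].
have [eq_tau|/H_phi] := eqVneq (tau u) (tau v); last by rewrite eq_phi H_irr.
move: eq_phi; rewrite /phi eq_tau; case tau_v: (tau v) => [[]|] => [/inj_a|/inj_b|_] //.
exact: apex_tau (etrans eq_tau tau_v) tau_v.
Qed.

(* Every edge of the robust subgraph lies in at least [#|blowup_vertex F|] triangles,
   enough to choose the apexes of the triangles of the blowup greedily. *)
Lemma robust_copy_blowup_copy (G : rel T) :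
  symmetric G -> contains_copy F (robust_subgraph G #|blowup_vertex F|) ->
  contains_copy (blowup_rel F) G.
Proof.
move=> G_sym [phi [inj_phi robust_phi]].
pose edge : finType := {E : {set V} | E \in edge_sets F}.
pose S (E : edge) := [set w | [forall z in val E, G (phi z) w]].
have big_S E : #|phi @: setT| + #|edge| <= #|S E|.
  have := valP E; rewrite inE => /existsP [u /existsP [v /andP [Fuv /eqP E_uv]]].
  have /andP [_ big_codeg] := robust_phi u v Fuv.
  have codeg_sub : [set w | G (phi u) w && G (phi v) w] \subset S E.
    apply/subsetP => w; rewrite !inE => /andP [Guw Gvw].
    by apply/forall_inP => z; rewrite E_uv => /set2P [->|->].
  apply: leq_trans (subset_leq_card codeg_sub); apply: leq_trans big_codeg.
  by rewrite card_sum leq_add2r (leq_trans (leq_imset_card _ _)) ?max_card.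
have [g [inj_g gS]] := injective_choice big_S.
have g_new (E : edge) v : g E != phi v.
  by apply: contraTneq (gS E) => ->; rewrite inE imset_f.
have g_common (E : edge) z : z \in val E -> G (phi z) (g E).
  by have := gS E; rewrite !inE => /andP [_ /forall_inP]; apply.
exists (fun a => match a with inl v => phi v | inr E => g E end); split.
  case=> [u|E] [v|E'] /= eq_f.
  - by rewrite (inj_phi _ _ eq_f).
  - by move: (g_new E' u); rewrite eq_f eqxx.
  - by move: (g_new E v); rewrite eq_f eqxx.
  - by rewrite (inj_g _ _ eq_f).
case=> [u|E] [v|E'] //= => [/robust_phi /andP [] //|/g_common //|].
by rewrite G_sym => /g_common.
Qed.

End Copies.

Lemma cube_le_of_link_bound c K M s n t tr :
  6 * c * K + (2 * c) ^ s.+1 * M < n -> t ^ s.+1 <= n ^ s * (M * n ^ s.+1) ->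
  tr <= n * t + 3 * (K * n ^ 2) -> c * tr <= n ^ 3.
Proof.
move=> big_n le_t le_tr; rewrite leqNgt; apply/negP => lt_tr.
have n_gt0 : 0 < n by apply: leq_ltn_trans big_n.
have lt_sq : n ^ 2 < 2 * c * t.
  have le_cK : 6 * c * K * n ^ 2 <= n ^ 3.
    by rewrite [n ^ 3]expnS leq_mul2r; apply/orP; right; lia.
  rewrite -(ltn_pmul2l n_gt0) -expnS.
  have := leq_mul (leqnn c) le_tr; rewrite !mulnDr.
  move: (n ^ 2) (n ^ 3) lt_tr le_cK => m2 m3; nia.
have : (n ^ 2) ^ s.+1 <= (2 * c) ^ s.+1 * (n ^ s * (M * n ^ s.+1)).
  apply: leq_trans (leq_expn2r s.+1 (ltnW lt_sq)) _.
  by rewrite expnMn leq_mul2l le_t orbT.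
have -> : (n ^ 2) ^ s.+1 = n * (n ^ s * n ^ s.+1).
  by rewrite -expnM -expnD -expnS; congr (n ^ _); lia.
have -> : (2 * c) ^ s.+1 * (n ^ s * (M * n ^ s.+1)) = (2 * c) ^ s.+1 * M * (n ^ s * n ^ s.+1).
  by lia.
rewrite leq_pmul2r ?muln_gt0 ?expn_gt0 ?n_gt0 // => le_n.
by move: big_n; rewrite ltnNge (leq_trans le_n) ?leq_addl.
Qed.

Lemma link_biclique_contains_copy (V T : finType) (F : rel V) tau (H : rel T) x
    (f : 'I_#|V|.+1 -> T) :
  symmetric H -> irreflexive H -> apex_colouring F tau -> injective f ->
  #|V| < #|[set u | [forall i, f i \in link_nbrs H x u]]| -> contains_copy F H.
Proof.
move=> H_sym H_irr colour_F inj_f many.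
have widen_inj m p (le_mp : m <= p) : injective (widen_ord le_mp).
  by move=> i j /(congr1 val) /= /val_inj.
pose iota (v : V) := widen_ord (leqnSn _) (enum_rank v).
have inj_iota : injective iota by move=> u v /widen_inj /enum_rank_inj.
pose b v := enum_val (widen_ord many (iota v)).
have link_b i v : H x (b v) && H x (f i) && H (b v) (f i).
  by have := enum_valP (widen_ord many (iota v)); rewrite inE => /forallP /(_ i); rewrite inE.
apply: (cone_biclique_contains_copy H_sym H_irr colour_F (x := x) (a := f \o iota) (b := b)).
- by move=> u v /inj_f /inj_iota.
- by move=> u v /enum_val_inj /widen_inj /inj_iota.
- by move=> v; have /andP [/andP [_ ->] _] := link_b (iota v) v.
- by move=> v; have /andP [/andP [-> _] _] := link_b ord0 v.
- by move=> u v; have /andP [_ ] := link_b (iota u) v; rewrite H_sym.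
Qed.

Lemma blowup_free_few_triangles (V : finType) (F : rel V) tau c :
  apex_colouring F tau -> 0 < c -> exists N, forall (T : finType) (G : rel T),
    N <= #|T| -> symmetric G -> irreflexive G -> ~ contains_copy (blowup_rel F) G ->
    c * triangles G <= #|T| ^ 3.
Proof.
move=> colour_F c_gt0; set K := #|blowup_vertex F|; set M := #|V| + #|V|.+1 ^ 2.
exists (6 * c * K + (2 * c) ^ #|V|.+1 * M).+1 => T G big_T G_sym G_irr no_copy.
set H := robust_subgraph G K.
have H_irr : irreflexive H by move=> u; rewrite /H /robust_subgraph G_irr.
have few_common x (f : 'I_#|V|.+1 -> T) : injective f ->
    #|[set u | [forall i, f i \in link_nbrs H x u]]| <= #|V|.
  move=> inj_f; rewrite leqNgt; apply/negP => many; apply/no_copy/robust_copy_blowup_copy => //.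
  exact: link_biclique_contains_copy (robust_subgraph_sym G_sym K) H_irr colour_F inj_f many.
have link_bound x : triangles_at H x ^ #|V|.+1 <= #|T| ^ #|V| * (M * #|T| ^ #|V|.+1).
  rewrite -sum_link_nbrs (leq_trans (expn_sum_le _ _)) // leq_mul2l.
  by rewrite (sum_card_expn_le (few_common x)) orbT.
have [x0 _] : exists x0, x0 \in T by apply/card_gt0P; apply: leq_trans big_T.
have [x max_x] := exists_ge_average x0 (triangles_at H).
apply: cube_le_of_link_bound big_T (link_bound x) _.
exact: leq_trans (triangles_robust_subgraph G_sym K) (leq_add max_x (leqnn _)).
Qed.

Definition deg (T : finType) (G : rel T) v := \sum_w (G v w : nat).

Definition arcs (T : finType) (G : rel T) := \sum_v deg G v.

Definition cut_at (T : finType) (G : rel T) x : rel T := fun u v => G u v && (G x u != G x v).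

Definition outer_deg (T : finType) (G : rel T) x := \sum_(v | ~~ G x v) deg G v.

Lemma cut_at_bipartite (T : finType) (G : rel T) x : bipartite (cut_at G x).
Proof. by exists (G x) => u v /andP []. Qed.

Lemma cut_at_simple (T : finType) (G : rel T) x : simple_graph G -> simple_graph (cut_at G x).
Proof.
by case=> G_sym G_irr; split=> [u v|u]; rewrite /cut_at ?negb_and ?G_irr // G_sym eq_sym.
Qed.

Section CheapCut.
Variables (T : finType) (G : rel T).
Hypothesis G_sym : symmetric G.

Lemma arcs_cut_at x :
  arcs G - arcs (cut_at G x) + arcs G = 2 * (triangles_at G x + outer_deg G x).
Proof.
pose inin := \sum_u \sum_v (G u v && G x u && G x v : nat).
pose outout := \sum_u \sum_v (G u v && ~~ G x u && ~~ G x v : nat).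
pose inout := \sum_u \sum_v (G u v && G x u && ~~ G x v : nat).
pose outin := \sum_u \sum_v (G u v && ~~ G x u && G x v : nat).
have arcsE : arcs G = inin + outout + inout + outin.
  rewrite -!big_split; apply: eq_bigr => u _; rewrite -!big_split; apply: eq_bigr => v _ /=.
  by case: (G u v) (G x u) (G x v) => [] [] [].
have arcs_cutE : arcs (cut_at G x) = inout + outin.
  rewrite -!big_split; apply: eq_bigr => u _; rewrite -!big_split; apply: eq_bigr => v _ /=.
  by rewrite /cut_at; case: (G u v) (G x u) (G x v) => [] [] [].
have inoutE : inout = outin.
  rewrite /inout exchange_big; apply: eq_bigr => u _; apply: eq_bigr => v _.
  by rewrite G_sym andbAC.
have trianglesE : triangles_at G x = inin.
  apply: eq_bigr => u _; apply: eq_bigr => v _.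
  by case: (G u v) (G x u) (G x v) => [] [] [].
have outer_degE : outer_deg G x = outout + outin.
  rewrite /outer_deg big_mkcond -!big_split; apply: eq_bigr => u _ /=.
  rewrite /deg -!big_split; case: (G x u) => /=; first by rewrite big1 // => v _; rewrite andbF.
  by apply: eq_bigr => v _; rewrite !andbT; case: (G u v) (G x v) => [] [].
rewrite arcsE arcs_cutE trianglesE outer_degE inoutE; lia.
Qed.

Lemma deg_le v : deg G v <= #|T|.
Proof. by rewrite /deg sum_bool_card max_card. Qed.

Lemma sum_outer_deg : \sum_x outer_deg G x = \sum_v deg G v * (#|T| - deg G v).
Proof.
under eq_bigr do rewrite /outer_deg big_mkcond.
rewrite exchange_big; apply: eq_bigr => v _ /=.
rewrite -big_mkcond sum_nat_const mulnC; congr (_ * _).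
rewrite /deg sum_bool_card -(cardC [set w | G v w]) addKn.
by apply: eq_card => w; rewrite !inE G_sym.
Qed.

Lemma exists_cheap_cut : 0 < #|T| -> exists x,
  2 * #|T| ^ 2 * (arcs G - arcs (cut_at G x) + arcs G) <= 4 * #|T| * triangles G + #|T| ^ 4.
Proof.
move=> T_gt0; have [x0 _] := card_gt0P T_gt0.
have [x min_x] := exists_le_average x0 (fun x => triangles_at G x + outer_deg G x).
exists x; rewrite big_split /= sum_outer_deg in min_x.
have deg_split : \sum_v deg G v * (#|T| - deg G v) + \sum_v deg G v ^ 2 = #|T| * arcs G.
  rewrite /arcs big_distrr -big_split; apply: eq_bigr => v _ /=.
  have := deg_le v; move: (deg G v) => d le_dn.
  have le_sq : d ^ 2 <= d * #|T| by rewrite -mulnn leq_mul2l le_dn orbT.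
  by rewrite mulnBr mulnn subnK // mulnC.
have cauchy_schwarz : arcs G ^ 2 <= #|T| * \sum_v deg G v ^ 2.
  by have := expn_sum_le (deg G) 1; rewrite expn1.
have am_gm : 2 * (#|T| ^ 2 * (2 * arcs G)) <= (#|T| ^ 2) ^ 2 + (2 * arcs G) ^ 2.
  exact: nat_Cauchy.
have := arcs_cut_at x; rewrite /triangles.
move: min_x deg_split cauchy_schwarz am_gm.
move: (\sum_v _ ^ 2) (\sum_v _ * _) (\sum_x _) (triangles_at G x) (outer_deg G x) => s2 q tr t o.
move: (arcs G) #|T| (arcs G - _) => a n d min_x deg_split cauchy_schwarz am_gm identity.
have := leq_mul (leqnn (4 * n)) min_x; have := congr1 (muln (4 * n)) deg_split.
rewrite identity; nia.
Qed.

End CheapCut.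

Lemma arcs_num_edges n (G : rel 'I_n) : simple_graph G -> arcs G = 2 * num_edges G.
Proof.
case=> G_sym G_irr.
have arcE u v : (G u v : nat) = (G u v && (u < v)%N) + (G v u && (v < u)%N).
  rewrite (G_sym v u); case: (ltngtP u v) => [||/val_inj ->] /=;
  by rewrite ?(negbTE (G_irr _)) ?andbT ?andbF ?addn0.
rewrite /arcs /deg.
under eq_bigr do under eq_bigr do rewrite arcE.
under eq_bigr do rewrite big_split /=.
rewrite big_split /= [X in _ + X]exchange_big /= addnn -mul2n; congr (2 * _).
rewrite /num_edges -sum_bool_card.
by rewrite -(pair_big xpredT xpredT (fun u v => (G u v && (u < v)%N : nat))).
Qed.

Local Open Scope ring_scope.

Lemma exists_nat_inv_le (R : realType) (x : R) :
  0 < x -> exists c : nat, (0 < c)%N /\ c%:R^-1 <= x.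
Proof.
move=> x_gt0; have xV_ge0 : 0 <= x^-1 by rewrite invr_ge0 ltW.
have := archi_boundP xV_ge0; set c := Num.Def.archi_bound _.
move=> lt_c; have c_gt0 : 0 < c%:R :> R by apply: lt_trans lt_c; rewrite invr_gt0.
exists c; split; first by rewrite -(ltr0n R).
by rewrite -[x]invrK lef_pV2 ?posrE ?invr_gt0 ?ltW.
Qed.

Lemma quarter_bound_of_cheap_cut (R : realType) (x : R) c n s tr :
  (0 < n)%N -> (0 < c)%N -> c%:R^-1 <= x ->
  (4 * n ^ 2 * s <= 4 * n * tr + n ^ 4)%N -> (c * tr <= n ^ 3)%N ->
  s%:R <= n%:R ^+ 2 / 4 + x * n%:R ^+ 2 :> R.
Proof.
rewrite -(ltr0n R) -[(0 < c)%N](ltr0n R) -!(ler_nat R) !natrD !natrM.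
move: (n%:R) (c%:R) (s%:R) (tr%:R) => N C S Tr N_gt0 C_gt0 le_x cut_le tr_le.
have le_Tr : Tr <= x * (N * (N * N)).
  apply: le_trans (_ : Tr <= C^-1 * (N * (N * N))) _.
    by rewrite -[Tr](mulKf (lt0r_neq0 C_gt0)) ler_wpM2l // invr_ge0 ltW.
  by rewrite ler_wpM2r // !mulr_ge0 // ltW.
have NN_gt0 : 0 < 4 * (N * N) by rewrite !mulr_gt0.
rewrite -(ler_pM2l NN_gt0) (le_trans cut_le) //.
have : 4 * N * Tr <= 4 * N * (x * (N * (N * N))) by rewrite ler_wpM2l // mulr_ge0 // ltW.
have -> : 4 * (N * N) * (N ^+ 2 / 4 + x * N ^+ 2) =
          N * (N * (N * N)) + 4 * N * (x * (N * (N * N))) by field.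
lra.
Qed.

Lemma blowup_free_cheap_cut (R : realType) (V : finType) (F : rel V) tau (x : R) :
  apex_colouring F tau -> 0 < x ->
  exists N, forall n (G : rel 'I_n), (N <= n)%N -> simple_graph G ->
    ~ contains_copy (blowup_rel F) G ->
    exists v, (num_edges G - num_edges (cut_at G v))%:R + (num_edges G)%:R
              <= n%:R ^+ 2 / 4 + x * n%:R ^+ 2.
Proof.
move=> colour_F x_gt0; have [c [c_gt0 le_x]] := exists_nat_inv_le x_gt0.
have [N few_triangles] := blowup_free_few_triangles colour_F c_gt0.
exists (maxn N 1) => n G; rewrite geq_max => /andP [le_N n_gt0] G_simple no_copy.
have [G_sym G_irr] := G_simple.
have tr_le : (c * triangles G <= n ^ 3)%N.
  rewrite -[X in (_ <= X ^ 3)%N](card_ord n); apply: few_triangles; rewrite ?card_ord //.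
  by move=> u; apply/negbTE.
have [|v] := exists_cheap_cut G_sym; first by rewrite card_ord.
rewrite card_ord (arcs_num_edges G_simple) (arcs_num_edges (cut_at_simple v G_simple)).
move=> cut_le; exists v; rewrite -natrD.
apply: quarter_bound_of_cheap_cut n_gt0 c_gt0 le_x _ tr_le.
move: cut_le; move: (num_edges G) (num_edges _) => e e'; nia.
Qed.

Unset Implicit Arguments.

Theorem proposition2p9 (R : realType) (V : finType) (F : rel V) :
  simple_graph F -> (bipartite F \/ odd_cycle F) ->
  (forall delta : R, 0 < delta ->
    exists eps : R, 0 < eps /\
      exists N : nat, forall (n : nat) (G : rel 'I_n), (N <= n)%N ->
        simple_graph G ->
        ~ contains_copy (blowup_rel F) G ->
        (n%:R ^+ 2 / 4 - eps * n%:R ^+ 2 <= (num_edges G)%:R) ->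
        exists G' : rel 'I_n,
          (forall x y, G' x y -> G x y) /\ simple_graph G' /\ bipartite G' /\
          ((num_edges G - num_edges G')%:R <= delta * n%:R ^+ 2))
  /\
  (forall eta : R, 0 < eta ->
    exists N : nat, forall (n : nat) (G : rel 'I_n), (N <= n)%N ->
      simple_graph G ->
      ~ contains_copy (blowup_rel F) G ->
      (num_edges G)%:R <= n%:R ^+ 2 / 4 + eta * n%:R ^+ 2).
Proof.
move=> _ F_shape; have [tau colour_F] : exists tau, apex_colouring F tau.
  by case: F_shape => [/bipartite_apex_colouring|/odd_cycle_apex_colouring].
split.
- move=> delta delta_gt0; have half_gt0 : 0 < delta / 2 by rewrite divr_gt0.
  exists (delta / 2); split=> //.
  have [N cheap_cut] := blowup_free_cheap_cut colour_F half_gt0.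
  exists N => n G le_N G_simple no_copy many_edges.
  have [v cut_le] := cheap_cut n G le_N G_simple no_copy.
  exists (cut_at G v); split; first by move=> u w /andP [].
  split; [exact: cut_at_simple | split; [exact: cut_at_bipartite | lra]].
- move=> eta eta_gt0; have [N cheap_cut] := blowup_free_cheap_cut colour_F eta_gt0.
  exists N => n G le_N G_simple no_copy.
  have [v] := cheap_cut n G le_N G_simple no_copy.
  have := ler0n R (num_edges G - num_edges (cut_at G v)); lra.
Qed.
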